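(* Let $X$ be a distance-regular graph of diameter $d\geq 3$ on $n$ vertices with degree $k$, and suppose $k>\gamma n>2$ for some $\gamma>0$. If $X$ is not bipartite, then $\mathrm{motion}(X)\geq \frac{\gamma}{3}n$.
   Context: A connected graph $X$ of diameter $d$ is distance-regular if there are integers $a_i,b_i,c_i$ ($0\le i\le d$) such that for all vertices $v,w$ with $\mathrm{dist}(v,w)=i$, $w$ has exactly $c_i$ neighbours at distance $i-1$, $a_i$ at distance $i$, $b_i$ at distance $i+1$ from $v$; $X$ is $k$-regular with $k=b_0$. The motion $\mathrm{motion}(X)$ is the minimum, over non-identity automorphisms of $X$, of the number of vertices not fixed by the automorphism. *)

From HB Require Import structures.
From mathcomp Require Import all_boot all_order all_algebra all_fingroup.
Set Implicit Arguments. Unset Strict Implicit. Unset Printing Implicit Defensive.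

Section Graphs.
Variable T : finType.
Variable e : rel T.

Definition simple_graph : Prop := symmetric e /\ irreflexive e.

Definition connected_graph : Prop := forall x y : T, connect e x y.

Fixpoint ball (n : nat) (x : T) : {set T} :=
  match n with
  | 0 => [set x]
  | n'.+1 => ball n' x :|: [set y | [exists z in ball n' x, e z y]]
  end.

(* graph distance: least i with y in ball i x (= #|T| if unreachable) *)
Definition dist (x y : T) : nat :=
  find (fun i => y \in ball i x) (iota 0 #|T|).

Definition diameter_eq (d : nat) : Prop :=
  (exists x y, dist x y = d) /\ (forall x y, dist x y <= d).

Definition regular (k : nat) : Prop := forall v : T, #|[set u | e v u]| = k.

Definition distance_regular (d : nat) : Prop :=
  connected_graph /\ diameter_eq d /\
  exists a b c : nat -> nat,
    forall i, i <= d -> forall v w, dist v w = i ->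
      [/\ #|[set u | e w u & (dist v u).+1 == i]| = c i,
          #|[set u | e w u & dist v u == i]| = a i &
          #|[set u | e w u & dist v u == i.+1]| = b i].

Definition bipartite : Prop :=
  exists f : T -> bool, forall x y, e x y -> f x != f y.

Definition is_automorphism (s : {perm T}) : Prop :=
  forall x y, e (s x) (s y) = e x y.

Definition nfixed_moved (s : {perm T}) : nat := #|[set x | s x != x]|.

End Graphs.

From HB Require Import structures.
From mathcomp Require Import all_boot all_order all_algebra all_fingroup.
From mathcomp Require Import zify.
Set Implicit Arguments. Unset Strict Implicit. Unset Printing Implicit Defensive.

(* Let lam and mu count the common neighbours of adjacent vertices and of vertices at
   distance 2.  Diameter at least 3 gives lam + mu < k and 2 lam <= k + mu, hence
   lam < 2k/3.  A neighbour of x fixed by an automorphism s is a common neighbour of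
   x and s x; so if s moves x but fewer than k/3 vertices, x and s x are at distance
   2 and mu > 2k/3.  Then the graph is triangle-free, and two vertices at the same
   distance i >= 2 from a base point can be moved one layer closer through a common
   neighbour; by induction no edge lies within a layer, so the graph is bipartite.
   Hence motion >= k/3 > gamma n / 3. *)

Section Balls.
Variables (T : finType) (e : rel T).
Implicit Types (x y z w : T) (m n : nat).

Lemma in_ball0 x y : (y \in ball e 0 x) = (y == x).
Proof. by rewrite /= inE. Qed.

Lemma in_ballS n x y :
  (y \in ball e n.+1 x) = (y \in ball e n x) || [exists z in ball e n x, e z y].
Proof. by rewrite /= !inE. Qed.

Lemma in_ballSP n x z :
  z \in ball e n.+1 x -> z \in ball e n x \/ exists2 y, y \in ball e n x & e y z.
Proof.
rewrite in_ballS => /orP [|/existsP [y /andP [Hy Hyz]]]; first by left.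
by right; exists y.
Qed.

Lemma ball_step n x y z : y \in ball e n x -> e y z -> z \in ball e n.+1 x.
Proof. by move=> Hy Hyz; rewrite in_ballS; apply/orP; right; apply/existsP; exists y; rewrite Hy. Qed.

Lemma ball_leS n x y : y \in ball e n x -> y \in ball e n.+1 x.
Proof. by move=> Hy; rewrite in_ballS Hy. Qed.

Lemma ball_le m n x y : m <= n -> y \in ball e m x -> y \in ball e n x.
Proof.
move=> /subnK <-; elim: (n - m) => [|j IHj] Hy //.
by rewrite addSn; apply/ball_leS/IHj.
Qed.

Lemma ball_cons n x y w : e x y -> w \in ball e n y -> w \in ball e n.+1 x.
Proof.
move=> Hxy; elim: n w => [|n IHn] w.
  by rewrite in_ball0 => /eqP ->; apply: (ball_step (y := x)); rewrite ?in_ball0.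
case/in_ballSP => [/IHn/ball_leS //|[w' /IHn Hw' Hw'w]].
exact: ball_step Hw' Hw'w.
Qed.

Lemma ball_sym n x y : symmetric e -> y \in ball e n x -> x \in ball e n y.
Proof.
move=> e_sym; elim: n y => [|n IHn] y; first by rewrite !in_ball0 eq_sym.
case/in_ballSP => [/IHn/ball_leS //|[w /IHn Hw Hwy]].
by apply: ball_cons Hw; rewrite e_sym.
Qed.

Lemma ball_trans m n x y z :
  y \in ball e m x -> z \in ball e n y -> z \in ball e (m + n) x.
Proof.
move=> Hy; elim: n z => [|n IHn] z; first by rewrite in_ball0 addn0 => /eqP ->.
rewrite addnS; case/in_ballSP => [/IHn/ball_leS //|[w /IHn Hw Hwz]].
exact: ball_step Hw Hwz.
Qed.

Lemma ball_path x p : path e x p -> last x p \in ball e (size p) x.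
Proof.
elim: p x => [|y p IHp] x /=; first by rewrite in_ball0.
by case/andP=> Hxy /IHp; apply: ball_cons.
Qed.

Lemma dist_min n x y : y \in ball e n x -> dist e x y <= n.
Proof.
move=> Hy; rewrite leqNgt; apply/negP => Hlt.
have Hsize : dist e x y <= #|T| by rewrite /dist -{2}(size_iota 0 #|T|) find_size.
have := before_find 0 Hlt.
by rewrite nth_iota ?add0n ?Hy // (leq_trans Hlt).
Qed.

End Balls.

Section Distance.
Variables (T : finType) (e : rel T).
Hypothesis e_conn : connected_graph e.
Implicit Types (x y z u v : T) (n : nat).

Lemma dist_ball x y : y \in ball e (dist e x y) x.
Proof.
have [p Hp ->] := connectP (e_conn x y).
have [p' Hp' Hu _] := shortenP Hp.
have Hreach : has (fun i => last x p' \in ball e i x) (iota 0 #|T|).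
  apply/hasP; exists (size p'); last exact: ball_path.
  by rewrite mem_iota /= -ltnS -[(size p').+1]/(size (x :: p')) -(card_uniqP Hu) ltnS max_card.
have := nth_find 0 Hreach; rewrite nth_iota //.
by move: Hreach; rewrite has_find size_iota.
Qed.

Lemma leq_distE n x y : (dist e x y <= n) = (y \in ball e n x).
Proof.
apply/idP/idP => [Hn|]; last exact: dist_min.
exact: ball_le Hn (dist_ball x y).
Qed.

Lemma dist_triangle x y z : dist e x z <= dist e x y + dist e y z.
Proof. by rewrite leq_distE; apply: ball_trans; apply: dist_ball. Qed.

Lemma dist_eq0 x y : (dist e x y == 0) = (x == y).
Proof. by rewrite -leqn0 leq_distE in_ball0 eq_sym. Qed.

Lemma dist_le1 x y : (dist e x y <= 1) = (x == y) || e x y.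
Proof.
rewrite leq_distE in_ballS in_ball0 eq_sym; congr (_ || _).
apply/existsP/idP => [[z /andP [/[!in_ball0] /eqP -> //]]|Hxy].
by exists x; rewrite in_ball0 eqxx.
Qed.

Lemma dist_adj x y z : e y z -> dist e x z <= (dist e x y).+1.
Proof.
move=> Hyz; apply: leq_trans (dist_triangle x y z) _.
by rewrite -addn1 leq_add2l dist_le1 Hyz orbT.
Qed.

Lemma dist_split i j x u :
  dist e x u = i + j -> exists p, dist e x p = i /\ dist e p u = j.
Proof.
elim: j u => [|j IHj] u.
  by rewrite addn0 => Hu; exists u; split=> //; apply/eqP; rewrite dist_eq0.
move=> Hu; have := dist_ball x u; rewrite Hu addnS.
case/in_ballSP => [/dist_min|[y Hy Hyu]]; first by rewrite Hu addnS ltnn.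
have Hxy : dist e x y = i + j.
  apply/eqP; rewrite eqn_leq dist_min //=.
  by have := dist_adj x Hyu; rewrite Hu addnS ltnS.
have [p [Hxp Hpy]] := IHj y Hxy.
exists p; split=> //; apply/eqP; rewrite eqn_leq.
have := dist_triangle x p u; rewrite Hu Hxp leq_add2l => ->.
by have := dist_adj p Hyu; rewrite Hpy => ->.
Qed.

Lemma bipartite_of_layers x0 :
  symmetric e -> (forall u v, e u v -> dist e x0 u != dist e x0 v) -> bipartite e.
Proof.
move=> e_sym Hlayer; exists (fun v => odd (dist e x0 v)) => u v Huv.
have Hvu : e v u by rewrite e_sym.
have := dist_adj x0 Huv; have := dist_adj x0 Hvu; have := Hlayer u v Huv.
move: (dist e x0 u) (dist e x0 v) => a b Hba Hab Hne.
have [->|->] : b = a.+1 \/ a = b.+1 by lia.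
  by rewrite /=; case: odd.
by rewrite /=; case: odd.
Qed.

Hypothesis e_simple : simple_graph e.

Lemma dist_eq1 x y : (dist e x y == 1) = e x y.
Proof.
have [_ e_irr] := e_simple.
apply/idP/idP => [/eqP Hxy|Hxy].
  have := dist_le1 x y; rewrite Hxy leqnn => /esym /orP [/eqP Hx|//].
  by have := dist_eq0 x y; rewrite Hxy Hx eqxx.
rewrite eqn_leq dist_le1 Hxy orbT /= lt0n dist_eq0.
by apply: contraTneq Hxy => ->; rewrite e_irr.
Qed.

Lemma dist_eq2 x p y : x != y -> ~~ e x y -> e x p -> e p y -> dist e x y = 2.
Proof.
move=> Hxy Hnxy Hxp Hpy; apply/eqP; rewrite eqn_leq.
have -> : dist e x y <= 2.
  apply: leq_trans (dist_triangle x p y) _.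
  by move: Hxp Hpy; rewrite -!dist_eq1 => /eqP -> /eqP ->.
by rewrite ltnNge dist_le1 negb_or Hxy.
Qed.

End Distance.

Lemma exists_dist (T : finType) (e : rel T) d m :
  connected_graph e -> diameter_eq e d -> m <= d -> exists x z, dist e x z = m.
Proof.
move=> e_conn [[x [y Hxy]] _] /subnKC Hd.
have [z [Hxz _]] := dist_split e_conn (etrans Hxy (esym Hd)).
by exists x, z.
Qed.

Lemma leq_cards_addI (T : finType) (S A B : {set T}) :
  A \subset S -> B \subset S -> #|A| + #|B| <= #|S| + #|A :&: B|.
Proof.
by move=> sAS sBS; rewrite -cardsUI leq_add2r subset_leq_card // subUset sAS.
Qed.

Definition common_nbrs (T : finType) (e : rel T) a b := [set w | e a w & e b w].

Section CommonNeighbours.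
Variables (T : finType) (e : rel T) (k : nat).
Hypothesis e_reg : regular e k.

Lemma common_nbrs_subl a b : common_nbrs e a b \subset [set w | e a w].
Proof. by apply/subsetP => w; rewrite !inE => /andP []. Qed.

Lemma leq_common_nbrs_add r a b :
  #|common_nbrs e r a| + #|common_nbrs e r b| <= k + #|common_nbrs e a b|.
Proof.
rewrite -(e_reg r).
apply: leq_trans (leq_cards_addI (common_nbrs_subl r a) (common_nbrs_subl r b)) _.
rewrite leq_add2l subset_leq_card //.
by apply/subsetP => w; rewrite !inE => /andP [/andP [_ ->] /andP [_ ->]].
Qed.

Lemma leq_common_nbrs_moved (s : {perm T}) x :
  is_automorphism e s -> k <= #|common_nbrs e x (s x)| + nfixed_moved s.
Proof.
move=> s_aut; set M := [set y | s y != y].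
have sub_fixed : [set w | e x w] :\: M \subset common_nbrs e x (s x).
  apply/subsetP => w; rewrite !inE negbK => /andP [/eqP sw Hxw].
  by rewrite Hxw -{1}sw s_aut.
apply: leq_trans (leq_add (subset_leq_card sub_fixed) (leqnn #|M|)).
rewrite cardsD -(e_reg x); have := subset_leq_card (subsetIr [set w | e x w] M).
lia.
Qed.

End CommonNeighbours.

Lemma distance_regular_common_nbrs (T : finType) (e : rel T) d :
  simple_graph e -> distance_regular e d -> 2 <= d ->
  exists lam mu,
    (forall a b, e a b -> #|common_nbrs e a b| = lam) /\
    (forall a b, dist e a b = 2 -> #|common_nbrs e a b| = mu).
Proof.
move=> e_simple [e_conn [_ [a [b [c Hdr]]]]] Hd.
exists (a 1), (c 2); split=> [x y Hxy | x y Hxy].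
- have [_ <- _] := Hdr 1 (ltnW Hd) x y (eqP (etrans (dist_eq1 e_conn e_simple x y) Hxy)).
  by apply: eq_card => u; rewrite !inE (dist_eq1 e_conn e_simple) andbC.
- have [<- _ _] := Hdr 2 Hd x y Hxy.
  by apply: eq_card => u; rewrite !inE eqSS (dist_eq1 e_conn e_simple) andbC.
Qed.

Section DistanceRegular.
Variables (T : finType) (e : rel T) (k lam mu : nat).
Hypotheses (e_simple : simple_graph e) (e_conn : connected_graph e).
Hypothesis e_reg : regular e k.
Hypothesis lam_spec : forall a b, e a b -> #|common_nbrs e a b| = lam.
Hypothesis mu_spec : forall a b, dist e a b = 2 -> #|common_nbrs e a b| = mu.

Let e_sym : symmetric e := e_simple.1.
Let e_irr : irreflexive e := e_simple.2.
Let dist_eq1 := dist_eq1 e_conn e_simple.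
Let dist_eq2 := dist_eq2 e_conn e_simple.

(* With [p] the neighbour of [x] on a geodesic to [z], the vertex [x], the common
   neighbours of [x] and [p], and those of [p] and [z] are disjoint neighbours of [p]. *)
Lemma lam_mu_lt_k x z : dist e x z = 3 -> lam + mu < k.
Proof.
move=> Hxz; have [p [Hxp Hpz]] := dist_split e_conn (Hxz : _ = 1 + 2).
have e_xp : e x p by rewrite -dist_eq1 Hxp.
pose B := x |: (common_nbrs e x p :|: common_nbrs e p z).
have disj : [disjoint common_nbrs e x p & common_nbrs e p z].
  apply/pred0P => w; rewrite !inE; apply/negP => /andP [/andP [e_xw _] /andP [_ e_zw]].
  have := dist_adj e_conn x (etrans (e_sym w z) e_zw); rewrite Hxz.
  have := dist_le1 e_conn x w; rewrite e_xw orbT; lia.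
have x_notin : x \notin common_nbrs e x p :|: common_nbrs e p z.
  rewrite !inE e_irr /= negb_and; apply/orP; right; apply/negP => e_zx.
  by move: (dist_eq1 x z); rewrite Hxz /= e_sym e_zx.
have : #|B| <= k.
  rewrite -(e_reg p) subset_leq_card //; apply/subsetP => w.
  by rewrite !inE => /or3P [/eqP ->|/andP [_ ->]|/andP [->]]; rewrite 1?e_sym ?orbT.
have := (leq_card_setU (common_nbrs e x p) (common_nbrs e p z)).2.
by rewrite cardsU1 x_notin disj => /eqP -> ; rewrite lam_spec // mu_spec //; lia.
Qed.

Lemma lam_double_le x z : dist e x z = 2 -> lam + lam <= k + mu.
Proof.
move=> Hxz; have [r [Hxr Hrz]] := dist_split e_conn (Hxz : _ = 1 + 1).
have e_xr : e x r by rewrite -dist_eq1 Hxr.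
have e_rz : e r z by rewrite -dist_eq1 Hrz.
by rewrite -{1}(lam_spec (etrans (e_sym r x) e_xr)) -(lam_spec e_rz) -(mu_spec Hxz) leq_common_nbrs_add.
Qed.

Section LargeMu.
Hypothesis mu_large : 2 * k < 3 * mu.
Hypothesis lam_mu_small : lam + mu < k.

(* A triangle [x, u, v] yields a neighbour [y] of [u] at distance 2 from both [x]
   and [v]; then [y] has two [mu]-sets of neighbours meeting in at most [lam] points. *)
Lemma triangle_free x u v : e x u -> e x v -> ~~ e u v.
Proof.
move=> e_xu e_xv; apply/negP => e_uv.
pose B := x |: (common_nbrs e x u :|: common_nbrs e v u).
have [y] : exists y, y \in [set w | e u w] :\: B.
  apply/card_gt0P; rewrite cardsD (e_reg u).
  have := subset_leq_card (subsetIr [set w | e u w] B).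
  have := (leq_card_setU (common_nbrs e x u) (common_nbrs e v u)).1.
  rewrite cardsU1 lam_spec // lam_spec; last by rewrite e_sym.
  have := leq_b1 (x \notin common_nbrs e x u :|: common_nbrs e v u); lia.
rewrite !inE => /andP [+ e_uy]; rewrite e_uy !andbT !negb_or.
case/and3P => y_neq_x n_xy n_vy.
have e_yu : e y u by rewrite e_sym.
have Hyx : dist e y x = 2 by apply: (dist_eq2 (p := u)); rewrite // e_sym.
have Hyv : dist e y v = 2.
  apply: (dist_eq2 (p := u)) => //; last by rewrite e_sym.
  by apply: contraNneq n_xy => ->.
have := leq_common_nbrs_add e_reg y x v.
by rewrite (mu_spec Hyx) (mu_spec Hyv) (lam_spec e_xv); lia.
Qed.

(* Two vertices at distance 2 from [x] have more than [k/2] common neighbours with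
   [x] each, so they share one; stepping to it reduces the layer index by one. *)
Lemma layer_edge_free i x u v : dist e x u = i -> dist e x v = i -> ~~ e u v.
Proof.
elim/ltn_ind: i x u v => i IH x u v.
case: i IH => [|[|j]] IH Hu Hv.
- move/eqP: Hu; move/eqP: Hv; rewrite !(dist_eq0 e_conn) => /eqP <- /eqP <-.
  by rewrite e_irr.
- by apply: (triangle_free (x := x)); rewrite -dist_eq1 ?Hu ?Hv.
have [p [Hxp Hpu]] := dist_split e_conn (Hu : _ = 2 + j).
have [q [Hxq Hqv]] := dist_split e_conn (Hv : _ = 2 + j).
have [w] : exists w, w \in common_nbrs e x p :&: common_nbrs e x q.
  apply/card_gt0P; have := leq_cards_addI (common_nbrs_subl e x p) (common_nbrs_subl e x q).
  rewrite e_reg (mu_spec Hxp) (mu_spec Hxq); lia.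
rewrite !inE => /andP [/andP [e_xw e_pw] /andP [_ e_qw]].
have Hxw : dist e x w = 1 by apply/eqP; rewrite dist_eq1.
have closer y t : e y w -> dist e y t = j -> dist e x t = j.+2 -> dist e w t = j.+1.
  move=> e_yw Hyt Hxt; have Hwy : dist e w y = 1 by apply/eqP; rewrite dist_eq1 e_sym.
  have := dist_triangle e_conn w y t; have := dist_triangle e_conn x w t.
  rewrite Hyt Hxt Hxw Hwy; lia.
exact: IH j.+1 (ltnSn _) w u v (closer p u e_pw Hpu Hu) (closer q v e_qw Hqv Hv).
Qed.

End LargeMu.

Lemma leq_deg_3_moved x3 z3 (s : {perm T}) :
  dist e x3 z3 = 3 -> ~ bipartite e -> is_automorphism e s -> s != 1%g ->
  k <= 3 * nfixed_moved s.
Proof.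
move=> Hd3 e_nbip s_aut s_ne1.
have lam_mu := lam_mu_lt_k Hd3.
have [p [Hp _]] := dist_split e_conn (Hd3 : _ = 2 + 1).
have lam2 := lam_double_le Hp.
have [x sx_neq_x] : exists x, s x != x.
  apply/existsP; apply: contraNT s_ne1 => /existsPn fixed.
  by apply/eqP/permP => x; rewrite perm1; apply/eqP/negbNE.
rewrite leqNgt; apply/negP => few_moved.
have := leq_common_nbrs_moved e_reg x s_aut.
have [e_xsx|n_xsx] := boolP (e x (s x)); first by rewrite lam_spec //; lia.
move=> Hk; have [y] : exists y, y \in common_nbrs e x (s x) by apply/card_gt0P; lia.
rewrite inE => /andP [e_xy e_sxy].
have Hxsx : dist e x (s x) = 2 by apply: (dist_eq2 (p := y)); rewrite 1?eq_sym // e_sym.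
rewrite mu_spec // in Hk.
have mu_large : 2 * k < 3 * mu by lia.
apply: e_nbip; apply: (bipartite_of_layers e_conn (x0 := x3) e_sym) => u v e_uv.
by apply: contraTneq e_uv => same; apply: (layer_edge_free mu_large lam_mu erefl (esym same)).
Qed.

End DistanceRegular.

Import Order.TTheory GRing.Theory Num.Theory.
Local Open Scope ring_scope.

Theorem proposition4p6 (R : realFieldType) (T : finType) (e : rel T)
    (d k : nat) (gamma : R) :
  simple_graph e ->
  distance_regular e d ->
  (3 <= d)%N ->
  regular e k ->
  0 < gamma ->
  gamma * (#|T|)%:R < k%:R ->
  2 < gamma * (#|T|)%:R ->
  ~ bipartite e ->
  forall s : {perm T}, is_automorphism e s -> s != 1%g ->
    gamma / 3%:R * (#|T|)%:R <= (nfixed_moved s)%:R.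
Proof.
move=> e_simple e_dr d_ge3 e_reg _ k_large _ e_nbip s s_aut s_ne1.
have [lam [mu [lam_spec mu_spec]]] := distance_regular_common_nbrs e_simple e_dr (ltnW d_ge3).
have [e_conn [e_diam _]] := e_dr.
have [x [z Hxz]] := exists_dist e_conn e_diam d_ge3.
have k_le := leq_deg_3_moved e_simple e_conn e_reg lam_spec mu_spec Hxz e_nbip s_aut s_ne1.
rewrite mulrAC ler_pdivrMr ?ltr0n // [X in _ <= X]mulrC.
by apply: le_trans (ltW k_large) _; rewrite -natrM ler_nat.
Qed.
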